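(* Let $p$ be a prime and $G$ a finite $p$-group of exponent $p$ in which every non-abelian subgroup $H$ satisfies $C_G(H)\le H$. If $|G|>p^p$, then $G$ is elementary abelian. Otherwise, either $G$ is elementary abelian, or $G$ has maximal class and has an elementary abelian subgroup of index $p$.
   Context: A group of order $p^n$ ($n\ge 2$) has maximal class if its nilpotency class is $n-1$. $C_G(H)$ denotes the centralizer of $H$ in $G$. *)

From mathcomp Require Import all_boot all_fingroup all_solvable.
Set Implicit Arguments. Unset Strict Implicit. Unset Printing Implicit Defensive.
Local Open Scope group_scope.

Definition maximal_class (p : nat) (gT : finGroupType) (G : {set gT}) : Prop :=
  2 <= logn p #|G| /\ nil_class G = (logn p #|G|).-1.

From mathcomp Require Import all_boot all_fingroup all_solvable.
Set Implicit Arguments. Unset Strict Implicit. Unset Printing Implicit Defensive.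

(* Let A be a maximal normal abelian subgroup of the nonabelian group G, so that
   C_G(A) = A. For x in G \ A, a minimal x-invariant subgroup B of A that x does
   not centralize generates with x a nonabelian subgroup, whose centralizer
   contains C_A(x); hence C_A(x) <= B, and the commutator map a |-> [a, x] on B
   forces |C_A(x)| = p. Counting fixed points of the conjugation action on A then
   gives |G : A| = p. As [A, x] lies in the Frattini subgroup, G = <a, x> for any
   a in A \ [A, x]; since (ax)^p = 1, a is a product of its conjugates a^(x^-i),
   0 < i < p, so A is generated by p - 1 elements and |A| <= p^(p-1). Finally
   |[B, G]| >= |B|/p for every B <= A, so the lower central series of G descends
   in steps of order p and G has maximal class. *)

Lemma pfactor_count_index p P m N : prime p -> p * p %| P -> 0 < P -> 0 < m ->
  N * (P * p ^ m) = P * P + (P * p ^ m - P) * p -> m = 1.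
Proof.
move=> pr_p ppP P_gt0 m_gt0 count; apply/eqP; rewrite eqn_leq m_gt0 andbT.
rewrite leqNgt; apply/negP=> m_gt1; set Q := p ^ m in count.
have pQ : p %| Q by rewrite /Q -(prednK m_gt0) expnS dvdn_mulr.
have ppQ : p * p %| Q by rewrite /Q -(subnKC m_gt1) expnD expnS expn1 dvdn_mulr.
have {}count : N * Q = P + (Q - 1) * p.
  apply/eqP; rewrite -(eqn_pmul2l P_gt0) mulnCA count mulnDr mulnA mulnBr muln1.
  by rewrite (mulnC P).
have : p * p %| (Q - 1) * p by rewrite -(dvdn_addr _ ppP) -count dvdn_mull.
rewrite dvdn_pmul2r ?prime_gt0 // => pQ1.
have := dvdn_sub pQ pQ1; rewrite subKn ?expn_gt0 ?prime_gt0 // dvdn1 => /eqP p1.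
by rewrite p1 in pr_p.
Qed.

Local Open Scope group_scope.

Section CommutatorMorphism.

Variables (gT : finGroupType) (A : {group gT}) (x : gT).
Hypotheses (cAA : abelian A) (nAx : x \in 'N(A)).

Lemma commg_norm_mem a : a \in A -> [~ a, x] \in A.
Proof. by move=> Aa; rewrite commgEl groupM ?groupV ?memJ_norm. Qed.

Lemma commg_morphM : {in A &, {morph (fun a => [~ a, x]) : u v / u * v}}.
Proof.
move=> u v Au Av /=; rewrite commMgJ; congr (_ * _).
by rewrite /conjg (centsP cAA _ (commg_norm_mem Au) _ Av) mulKg.
Qed.

Canonical commg_morphism := Morphism commg_morphM.

Lemma ker_commg_morphism : 'ker commg_morphism = 'C_A[x].
Proof.
apply/setP=> a; rewrite [in RHS]inE; apply/idP/andP => [ka | [Aa /cent1P cax]].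
  have Aa := dom_ker ka; split=> //; apply/cent1P/commgP/eqP.
  by move/(kerP _ Aa): ka.
by apply/(kerP _ Aa); apply/eqP/commgP.
Qed.

Lemma card_commg_morphim (B : {group gT}) : B \subset A ->
  #|B| = (#|'C_B[x]| * #|commg_morphism @* B|)%N.
Proof.
move=> sBA; rewrite card_morphim ker_commg_morphism (setIidPr sBA) -indexgI.
by rewrite setIA (setIidPl sBA) Lagrange ?subsetIl.
Qed.

Lemma commg_morphim_sub (B : {group gT}) : B \subset A -> x \in 'N(B) ->
  commg_morphism @* B \subset B.
Proof.
move=> sBA nBx; apply/subsetP=> _ /morphimP[b _ Bb ->] /=.
by rewrite commgEl groupM ?groupV ?memJ_norm.
Qed.

Lemma commg_morphim_norm (B : {group gT}) : B \subset A -> x \in 'N(B) ->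
  x \in 'N(commg_morphism @* B).
Proof.
move=> sBA nBx; rewrite inE; apply/subsetP=> _ /imsetP[_ /morphimP[b _ Bb ->] ->].
have Bbx : b ^ x \in B by rewrite memJ_norm.
rewrite /= conjRg [x ^ x]conjgE mulKg.
exact: (mem_morphim commg_morphism (subsetP sBA _ Bbx) Bbx).
Qed.

Lemma commg_morphimR (B X : {set gT}) : x \in X ->
  commg_morphism @* B \subset [~: B, X].
Proof. by move=> Xx; apply/subsetP=> _ /morphimP[b _ Bb ->]; apply: mem_commg. Qed.

Lemma card_cent1_min_noncentral (p : nat) (B : {group gT}) :
    0 < p -> exponent A %| p -> B \subset A ->
  [min B | (x \in 'N(B)) && ~~ (B \subset 'C[x])] -> #|'C_B[x]| <= p.
Proof.
move=> p_gt0 expA sBA /mingroupP[/andP[nBx ncBx] minB].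
set K := commg_morphism @* B.
have cardB := card_commg_morphim sBA; rewrite -/K in cardB.
have sKB : K \subset B := commg_morphim_sub sBA nBx.
have nKx : x \in 'N(K) := commg_morphim_norm sBA nBx.
have [cKx | ncKx] := boolP (K \subset 'C[x]); last first.
  have defK : K :=: B by apply: minB; rewrite ?nKx.
  move/eqP: cardB; rewrite defK -{1}(mul1n #|B|) eqn_pmul2r // => /eqP <-.
  exact: p_gt0.
have [b Bb ncb] := subsetPn ncBx.
have Ab := subsetP sBA b Bb.
have cbK : commute <[b]> K.
  apply: centC; apply: sub_abelian_cent2 cAA _ _; first by rewrite cycle_subG.
  exact: subset_trans sKB sBA.
have defB : <[b]> <*> K = B.
  apply: minB; last by rewrite join_subG cycle_subG Bb sKB.
  apply/andP; split.
    rewrite inE conjYg join_subG (normP nKx) joing_subr andbT -cycleJ cycle_subG.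
    rewrite conjg_mulR groupM ?mem_gen ?inE ?cycle_id //.
    by apply/orP; right; exact: (mem_morphim commg_morphism Ab Bb).
  by apply: contra ncb => /subsetP-> //; rewrite mem_gen ?inE ?cycle_id.
have leB : #|B| <= p * #|K|.
  have ob : #|<[b]>| <= p.
    by rewrite -orderE dvdn_leq // (dvdn_trans (dvdn_exponent Ab)).
  rewrite -defB (comm_joingE cbK); apply: leq_trans (leq_mul ob (leqnn #|K|)).
  by rewrite dvdn_leq ?muln_gt0 ?cardG_gt0 ?dvdn_cardMg.
by rewrite -(leq_pmul2r (cardG_gt0 K)) -cardB.
Qed.

End CommutatorMorphism.

Lemma expgM_prod_conj (gT : finGroupType) (a x : gT) n :
  (a * x) ^+ n = (\prod_(i < n) a ^ (x^-1 ^+ i)) * x ^+ n.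
Proof.
elim: n => [|n IHn]; first by rewrite big_ord0 !expg0 mulg1.
rewrite expgSr IHn big_ord_recr /= expgVn conjgE invgK -!mulgA; congr (_ * _).
by rewrite expgSr !mulgA mulgKV.
Qed.

Section ConjugatePowers.

Variables (gT : finGroupType) (a y : gT) (n : nat).
Hypotheses (yn1 : y ^+ n.+1 = 1) (prod_conj1 : \prod_(i < n.+1) a ^ (y ^+ i) = 1).

Let U := <<[set a ^ (y ^+ i.+1) | i : 'I_n]>>.

Lemma mem_gen_conj_powers : a \in U.
Proof.
move: prod_conj1; rewrite big_ord_recl expg0 conjg1 => /mulg1_eq aV.
rewrite -[a]invgK aV groupV group_prod // => i _.
by rewrite mem_gen //; apply/imsetP; exists i.
Qed.

Lemma norm_gen_conj_powers : y \in 'N(U).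
Proof.
rewrite inE -genJ gen_subG; apply/subsetP=> _ /imsetP[_ /imsetP[i _ ->] ->].
rewrite -conjgM -expgSr.
have [lt_in | ge_in] := ltnP i.+1 n.
  by rewrite mem_gen //; apply/imsetP; exists (Ordinal lt_in).
have -> : i.+2 = n.+1 by apply/eqP; rewrite eqn_leq !ltnS ltn_ord ge_in.
by rewrite yn1 conjg1 mem_gen_conj_powers.
Qed.

End ConjugatePowers.

Lemma card_abelem_gen_le (gT : finGroupType) p (S : {set gT}) :
  prime p -> p.-abelem <<S>> -> #|<<S>>| <= p ^ #|S|.
Proof.
move=> pr_p abelS; rewrite (card_pgroup (abelem_pgroup abelS)) -(rank_abelem abelS).
rewrite -grank_abelian ?(abelem_abelian abelS) //.
by rewrite leq_pexp2l ?prime_gt0 ?grank_min.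
Qed.

Lemma order_exponent_prime (gT : finGroupType) (G : {group gT}) p x :
  prime p -> exponent G = p -> x \in G -> x != 1 -> #[x] = p.
Proof.
move=> pr_p expG Gx ntx; apply/(prime_nt_dvdP pr_p); first by rewrite order_eq1.
by rewrite -expG dvdn_exponent.
Qed.

Section MaximalAbelianNormal.

Variables (gT : finGroupType) (p : nat) (G A : {group gT}).
Hypotheses (pr_p : prime p) (pG : p.-group G) (expG : exponent G = p).
Hypothesis centG_sub : forall H : {group gT},
  H \subset G -> ~~ abelian H -> 'C_G(H) \subset H.
Hypotheses (nsAG : A <| G) (cGA : 'C_G(A) = A) (ltAG : A \proper G).

Let sAG : A \subset G := normal_sub nsAG.
Let nAG : G \subset 'N(A) := normal_norm nsAG.
Let p_gt0 : 0 < p := prime_gt0 pr_p.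
Let p_gt1 : 1 < p := prime_gt1 pr_p.

Lemma max_abelian_abelian : abelian A.
Proof. by rewrite /abelian -{1}cGA subsetIr. Qed.
Let cAA := max_abelian_abelian.

Lemma max_abelian_abelem : p.-abelem A.
Proof. by rewrite abelemE // cAA -expG exponentS. Qed.

Lemma cycle_meet_max_abelian x : x \in G -> x \notin A -> <[x]> :&: A = 1.
Proof.
move=> Gx nAx; apply: prime_TIg; last by rewrite cycle_subG.
have ntx : x != 1 by apply: contraNneq nAx => ->.
by rewrite -orderE (order_exponent_prime pr_p expG).
Qed.

Lemma cent1_max_abelian_neq1 x : x \in G -> 'C_A[x] != 1.
Proof.
move=> Gx; have ntG : G :!=: 1 by rewrite -proper1G (sub_proper_trans (sub1G A)).
have sZC : 'Z(G) \subset 'C_A[x].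
  rewrite subsetI -{1}cGA setIS ?centS //= sub_cent1.
  by rewrite (subsetP _ x Gx) // centsC subsetIr.
have ntZ : 'Z(G) != 1 by rewrite center_nil_eq1 ?(pgroup_nil pG).
by apply: contraNneq ntZ => C1; apply/eqP/trivgP; rewrite -C1.
Qed.

Lemma cent1_max_abelian_sub (B : {group gT}) x : x \in G -> x \notin A ->
  B \subset A -> x \in 'N(B) -> ~~ (B \subset 'C[x]) -> 'C_A[x] \subset B.
Proof.
move=> Gx nAx sBA nBx ncBx; set H := B <*> <[x]>.
have nBX : <[x]> \subset 'N(B) by rewrite cycle_subG.
have sHG : H \subset G by rewrite join_subG (subset_trans sBA sAG) cycle_subG.
have ncH : ~~ abelian H.
  apply: contra ncBx => cHH; rewrite -cent_cycle.
  exact: sub_abelian_cent2 cHH (joing_subl _ _) (joing_subr _ _).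
have sCH : 'C_A[x] \subset H.
  apply: subset_trans (centG_sub sHG ncH).
  rewrite subsetI (subset_trans (subsetIl _ _) sAG) centY subsetI cent_cycle.
  rewrite subsetIr andbT (subset_trans (subsetIl _ _)) //.
  exact: subset_trans cAA (centS sBA).
have : 'C_A[x] \subset H :&: A by rewrite subsetI sCH subsetIl.
by rewrite /H norm_joinEr // -group_modl // cycle_meet_max_abelian ?mulg1.
Qed.

Let expA : exponent A %| p. Proof. by rewrite -expG exponentS. Qed.

Lemma max_abelian_not_sub_cent1 x : x \in G -> x \notin A -> ~~ (A \subset 'C[x]).
Proof.
by move=> Gx; apply: contra; rewrite sub_cent1 => cAx; rewrite -cGA inE Gx.
Qed.

Lemma card_cent1_max_abelian x : x \in G -> x \notin A -> #|'C_A[x]| = p.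
Proof.
move=> Gx nAx; have nAx' := subsetP nAG x Gx.
pose P (B : {group gT}) := (x \in 'N(B)) && ~~ (B \subset 'C[x]).
have PA : P A by rewrite /P nAx' max_abelian_not_sub_cent1.
have [B minB sBA] := mingroup_exists PA.
have [/andP[nBx ncBx] _] := mingroupP minB.
have sCB := cent1_max_abelian_sub Gx nAx sBA nBx ncBx.
have leCp : #|'C_A[x]| <= p.
  apply: leq_trans (card_cent1_min_noncentral cAA nAx' p_gt0 expA sBA minB).
  by rewrite subset_leq_card // subsetI sCB subsetIr.
have pC : p.-group 'C_A[x] := pgroupS (subset_trans (subsetIl _ _) sAG) pG.
have [_ pdvdC _] := pgroup_pdiv pC (cent1_max_abelian_neq1 Gx).
by apply/eqP; rewrite eqn_leq leCp dvdn_leq.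
Qed.

Lemma card_max_abelian_gt : p < #|A|.
Proof.
have [_ [x Gx nAx]] := properP ltAG.
rewrite -(card_cent1_max_abelian Gx nAx) proper_card // properE subsetIl /=.
by rewrite subsetI subxx max_abelian_not_sub_cent1.
Qed.

Lemma sum_card_cent1_max_abelian :
  \sum_(g in G) #|'C_A[g]| = (#|A| * #|A| + (#|G| - #|A|) * p)%N.
Proof.
rewrite (big_setID A) /= (setIidPr sAG).
rewrite (eq_bigr (fun _ => #|A|)) => [|g Ag]; last first.
  by rewrite (setIidPl _) // sub_cent1 (subsetP cAA).
rewrite [X in (_ + X)%N](eq_bigr (fun _ => p)) => [|g /setDP[Gg nAg]]; last first.
  exact: card_cent1_max_abelian.
by rewrite !sum_nat_const cardsD (setIidPr sAG).
Qed.

Lemma index_max_abelian : #|G : A| = p.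
Proof.
have [N countN] : exists N, \sum_(g in G) #|'C_A[g]| = (N * #|G|)%N.
  have actsA : [acts G, on A | 'J] by rewrite astabsJ.
  exists #|orbit 'J G @: A|; rewrite -(Frobenius_Cauchy actsA).
  by apply: eq_bigr => g _; rewrite afixJ cent_set1.
have pA : p.-group A := pgroupS sAG pG.
have ppA : (p * p %| #|A|)%N.
  rewrite (card_pgroup pA) -(expnS p 1) dvdn_exp2l //.
  by rewrite -(ltn_exp2l _ _ p_gt1) -card_pgroup // expn1 card_max_abelian_gt.
have [m _ defGA] : exists2 m, m <= logn p #|G| & #|G : A| = (p ^ m)%N.
  by apply/dvdn_pfactor => //; rewrite -card_pgroup // dvdn_indexg.
have m_gt0 : 0 < m.
  rewrite lt0n; apply: contraTneq ltAG => m0.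
  by rewrite properEcard sAG -(Lagrange sAG) defGA m0 muln1 ltnn.
rewrite defGA (pfactor_count_index pr_p ppA (cardG_gt0 A) m_gt0 (N := N)) ?expn1 //.
by rewrite -defGA (Lagrange sAG) -countN sum_card_cent1_max_abelian.
Qed.

Lemma mulg_max_abelian_cycle x : x \in G -> x \notin A -> A * <[x]> = G.
Proof.
move=> Gx nAx; apply/eqP; rewrite eqEcard mul_subG ?cycle_subG //=.
rewrite TI_cardMg; last by rewrite setIC cycle_meet_max_abelian.
rewrite -(Lagrange sAG) index_max_abelian -orderE.
by rewrite (order_exponent_prime pr_p expG) //; apply: contraNneq nAx => ->.
Qed.

Lemma card_max_abelian_le : #|A| <= p ^ p.-1.
Proof.
have [_ [x Gx nAx]] := properP ltAG.
have nAx' := subsetP nAG x Gx.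
set D := commg_morphism cAA nAx' @* A.
have cardA : #|A| = (p * #|D|)%N.
  by rewrite (card_commg_morphim cAA nAx' (subxx A)) card_cent1_max_abelian.
have sDPhi : D \subset 'Phi(G).
  rewrite (Phi_joing pG); apply: subset_trans (joing_subl _ _).
  exact: subset_trans (commg_morphimR _ _ _ Gx) (commSg _ sAG).
have [a Aa nDa] : exists2 a, a \in A & a \notin D.
  apply/subsetPn; have ltDA : #|D| < #|A| by rewrite cardA ltn_Pmull ?cardG_gt0.
  by apply: contraTN ltDA => /subset_leq_card; rewrite leqNgt.
have defA : <[a]> * D = A.
  apply/eqP; rewrite eqEcard mul_subG ?cycle_subG ?commg_morphim_sub //=.
  have oa : #|<[a]>| = p.
    rewrite -orderE (order_exponent_prime pr_p expG) ?(subsetP sAG) //.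
    by apply: contraNneq nDa => ->.
  by rewrite TI_cardMg ?oa ?cardA // prime_TIg ?oa // cycle_subG.
have defG : <<[set a; x]>> = G.
  apply/Phi_nongen/eqP; rewrite eqEsubset join_subG Phi_sub subUset !sub1set.
  rewrite (subsetP sAG) //= Gx -{1}(mulg_max_abelian_cycle Gx nAx) -defA.
  rewrite !mul_subG ?cycle_subG ?(subset_trans sDPhi) ?joing_subl //.
    by rewrite (subsetP (joing_subr _ _)) ?set21.
  by rewrite (subsetP (joing_subr _ _)) ?set22.
pose U := <<[set a ^ (x^-1 ^+ i.+1) | i : 'I_p.-1]>>.
have conj_prod1 : \prod_(i < p.-1.+1) a ^ (x^-1 ^+ i) = 1.
  have xp1 : x ^+ p = 1 by rewrite -expG expg_exponent.
  have := expg_exponent (groupM (subsetP sAG a Aa) Gx).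
  by rewrite expG expgM_prod_conj xp1 mulg1 -(prednK p_gt0).
have x'p1 : x^-1 ^+ p.-1.+1 = 1 by rewrite prednK // -expG expg_exponent ?groupV.
have aU : a \in U := mem_gen_conj_powers conj_prod1.
have nUx : x \in 'N(U).
  by rewrite -[x]invgK groupV (norm_gen_conj_powers x'p1 conj_prod1).
have sUA : U \subset A.
  rewrite gen_subG; apply/subsetP=> _ /imsetP[i _ ->].
  by rewrite memJ_norm ?groupX ?groupV.
have leGU : #|G| <= #|U| * p.
  have : G \subset U * <[x]>.
    rewrite -norm_joinEr ?cycle_subG // -defG gen_subG subUset !sub1set.
    by rewrite (subsetP (joing_subl _ _)) // (subsetP (joing_subr _ _)) ?cycle_id.
  move/subset_leq_card/leq_trans; apply.
  apply: leq_trans (dvdn_leq _ (dvdn_cardMg _ _)) _.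
    by rewrite muln_gt0 !cardG_gt0.
  by rewrite leq_mul2l -orderE dvdn_leq ?orbT // -expG dvdn_exponent.
have leAU : #|A| <= #|U|.
  by move: leGU; rewrite -(Lagrange sAG) index_max_abelian leq_pmul2r.
apply: leq_trans leAU (leq_trans (card_abelem_gen_le pr_p _) _).
  exact: abelemS sUA max_abelian_abelem.
by rewrite leq_exp2l // (leq_trans (leq_imset_card _ _)) ?card_ord.
Qed.

Lemma card_max_abelian_sub_commg (B : {group gT}) :
  B \subset A -> #|B| <= p * #|[~: B, G]|.
Proof.
move=> sBA; have [_ [x Gx nAx]] := properP ltAG.
have nAx' := subsetP nAG x Gx.
rewrite (card_commg_morphim cAA nAx' sBA) leq_mul //.
  by rewrite -(card_cent1_max_abelian Gx nAx) subset_leq_card ?setSI.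
exact/subset_leq_card/commg_morphimR.
Qed.

Lemma lcn_sub_max_abelian i : 'L_i.+2(G) \subset A.
Proof.
elim: i => [|i IHi]; last first.
  by rewrite lcnSn; apply: subset_trans IHi; rewrite commg_subl lcn_norm.
rewrite lcn2 der1_min // cyclic_abelian // prime_cyclic //.
by rewrite card_quotient // index_max_abelian.
Qed.

Lemma card_lcn_max_abelian i : #|A| <= p ^ i.+1 * #|'L_i.+2(G)|.
Proof.
elim: i => [|i IHi].
  rewrite expn1 (leq_trans (card_max_abelian_sub_commg (subxx A))) // leq_mul2l.
  by rewrite subset_leq_card ?orbT // lcn2 commSg.
apply: leq_trans IHi _; rewrite (expnSr p i.+1) -mulnA leq_mul2l lcnSn.
by rewrite card_max_abelian_sub_commg ?orbT ?lcn_sub_max_abelian.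
Qed.

Lemma logn_card_max_abelian_overgroup : logn p #|G| = (logn p #|A|).+1.
Proof.
rewrite -(Lagrange sAG) index_max_abelian lognM ?cardG_gt0 //.
by rewrite (logn_prime p pr_p) eqxx addn1.
Qed.

Lemma maximal_class_max_abelian : maximal_class p G.
Proof.
have pA : p.-group A := pgroupS sAG pG.
have logA_gt1 : 1 < logn p #|A|.
  by rewrite -(ltn_exp2l _ _ p_gt1) -card_pgroup // expn1 card_max_abelian_gt.
rewrite /maximal_class logn_card_max_abelian_overgroup ltnS (ltnW logA_gt1) /=.
split=> //; apply/eqP; rewrite eqn_leq; apply/andP; split.
  have := nil_class_pgroup pG.
  by rewrite logn_card_max_abelian_overgroup /= (maxn_idPr _) // ltnW.
case: (logn p #|A|) logA_gt1 (card_pgroup pA) => [|[|d]] // _ cardA.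
rewrite ltnNge; apply/negP=> /(lcn_nil_classP _ (pgroup_nil pG)) L1.
by have := card_lcn_max_abelian d; rewrite L1 cards1 muln1 cardA leq_exp2l // ltnn.
Qed.

Lemma card_max_abelian_overgroup_le : #|G| <= p ^ p.
Proof.
rewrite -(Lagrange sAG) index_max_abelian -{3}(prednK p_gt0) expnSr leq_mul2r.
by rewrite card_max_abelian_le orbT.
Qed.

End MaximalAbelianNormal.

Unset Implicit Arguments.

Theorem theorem6p14 (p : nat) (gT : finGroupType) (G : {group gT}) :
  prime p -> p.-group G -> exponent G = p ->
  (forall H : {group gT}, H \subset G -> ~~ abelian H -> 'C_G(H) \subset H) ->
  (p ^ p < #|G| -> p.-abelem G) /\
  (#|G| <= p ^ p ->
     p.-abelem G \/
     (maximal_class p G /\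
      exists A : {group gT}, [/\ A \subset G, #|G : A| = p & p.-abelem A])).
Proof.
move=> pr_p pG expG centG_sub.
have [cGG | ncGG] := boolP (abelian G).
  have abelG : p.-abelem G by rewrite abelemE // cGG expG dvdnn.
  by split=> // _; left.
pose P (A : {group gT}) := (A <| G) && abelian A.
have P1 : P 1%G by rewrite /P normal1 abelian1.
have [A maxA _] := maxgroup_exists P1.
have /SCN_P[nsAG cGA] := max_SCN pG maxA.
have ltAG : A \proper G.
  rewrite properEneq normal_sub // andbT.
  by apply: contraNneq ncGG => <-; apply: max_abelian_abelian cGA.
have leG := card_max_abelian_overgroup_le pr_p pG expG centG_sub nsAG cGA ltAG.
split=> [ltG | _]; first by rewrite ltnNge leG in ltG.
right; split.
  exact: maximal_class_max_abelian pr_p pG expG centG_sub nsAG cGA ltAG.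
exists A; split; first exact: normal_sub nsAG.
  exact: index_max_abelian pr_p pG expG centG_sub nsAG cGA ltAG.
exact: max_abelian_abelem pr_p expG nsAG cGA.
Qed.
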